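(* For $i\in\{1,2\}$ let $(\mathcal B_{i,\mathbb R},\mathcal S_i,e_i,m_i)$ be as in the context with the same constant $\kappa$. Let $A\in L(\mathcal B_{1,\mathbb R},\mathcal B_{2,\mathbb R})$ with $A(\mathcal C_{1,\mathbb R})\subset\mathcal C_{2,\mathbb R}$ and $\Delta_{\mathbb R}:=\operatorname{diam}_{d_H}(A(\mathcal C_{1,\mathbb R}))<\infty$, and extend $A$ complex-linearly to $\mathcal B_{1,\mathbb C}\to\mathcal B_{2,\mathbb C}$. Then \[\Delta_{\mathbb C}:=\operatorname{diam}_{\delta_{\mathcal C_{2,\mathbb C}}}(A(\mathcal C_{1,\mathbb C}))\le8\Delta_{\mathbb R}+2\ln[3\sqrt2\kappa^{-2}].\]
   Context: Cone setting. $V$ is a real topological vector space, $\mathcal S\subset V'$ a set of linear functionals such that $\ell(x)=0$ for all $\ell\in\mathcal S$ implies $x=0$, $C_{\mathbb R}=\{h\in V\setminus\{0\}:\ell(h)\ge0\ \forall\ell\in\mathcal S\}$, and $e\in C_{\mathbb R}$ such that for every $h\in V$ some $\lambda\ge0$ has $\lambda e-h\in C_{\mathbb R}$. Norm $\|h\|=\inf\{\lambda\ge0:\ell(\lambda e\pm h)\ge0\ \forall\ell\in\mathcal S\}$; $\mathcal B_{\mathbb R}$ the completion; $\mathcal C_{\mathbb R}=\{h\in\mathcal B_{\mathbb R}\setminus\{0\}:\ell(h)\ge0\ \forall\ell\in\mathcal S\}$. $\mathcal S_*$ is the weak-$*$ closure of the convex hull of $\{\lambda\ell:\lambda>0,\ell\in\mathcal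 S\}$; there are $m\in\mathcal S_*$, $\kappa\in(0,1)$ with $m(e)=1$ and $m(h)\ge\kappa\|h\|$ on $\mathcal C_{\mathbb R}$. Hilbert metric on $\mathcal C_{\mathbb R}$: $d_H(h,g)=\ln(\beta/\alpha)$, $\alpha=\sup\{\lambda>0:g-\lambda h\in\mathcal C_{\mathbb R}\}$, $\beta=\inf\{\mu>0:\mu h-g\in\mathcal C_{\mathbb R}\}$. $\mathcal B_{\mathbb C}$ is the complexification (norm $\sup_\theta(\|\Re(e^{i\theta}(x+iy))\|^2+\|\Im(e^{i\theta}(x+iy))\|^2)^{1/2}$), real functionals extended complex-linearly. $\mathcal C_{\mathbb C}=\{z(x+iy):z\ne0,x,y\in\mathcal C_{\mathbb R}\}$, $\mathcal C'_{\mathbb C}=\{\ell\in\mathcal B'_{\mathbb C}:\ell(h)\ne0\ \forall h\in\mathcal C_{\mathbb C}\}$, $E(h,g)=\{\ell(h)/\ell(g):\ell\in\mathcal C'_{\mathbb C}\}$, $\delta_{\mathcal C}(h,g)=\ln\frac{\sup_{E(h,g)}|z|}{\inf_{E(h,g)}|z|}$; diameters in $\mathcal C_{\mathbb C}$ are w.r.t. $\delta_{\mathcal C}$. Objects of the $i$-th space carry index $i$. *)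

From HB Require Import structures.
From mathcomp Require Import all_boot all_order all_algebra.
From mathcomp Require Import all_classical all_reals all_analysis.
From mathcomp Require Import complex.

Set Implicit Arguments.
Unset Strict Implicit.
Unset Printing Implicit Defensive.

Import Order.TTheory GRing.Theory Num.Theory.
Import numFieldNormedType.Exports.
Local Open Scope classical_set_scope.
Local Open Scope ring_scope.

Section ConeDefs.
Variable R : realType.

Section Real.
Variable B : normedModType R.

Definition is_linear (W : lmodType R) (f : B -> W) :=
  forall (a : R) (x y : B), f (a *: x + y) = a *: f x + f y.

Definition coneR (S : set (B -> R)) : set B :=
  [set h | h <> 0 /\ forall l, S l -> 0 <= l h].

(* m belongs to S_* : the weak-* closure (topology of pointwise convergence
   on the points of V) of the convex hull of {lambda l : lambda > 0, l in S},
   i.e. of the set of finite positive combinations of elements of S. *)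
Definition in_Sstar (D : set B) (S : set (B -> R)) (m : B -> R) :=
  forall (xs : seq B) (eps : R), 0 < eps -> (forall x, x \in xs -> D x) ->
  exists (cl : seq (R * (B -> R))),
    [/\ cl != [::], (forall p, p \in cl -> 0 < p.1 /\ S p.2) &
        forall x, x \in xs ->
          `| m x - \sum_(p <- cl) p.1 * p.2 x | < eps].

(* The cone setting.  [D] is (the image of) V inside its completion B,
   the functionals of S are (the continuous extensions to B of) the
   elements of S, e is the order unit, m and kappa as in the context. *)
Definition cone_setting (D : set B) (S : set (B -> R)) (e : B)
    (m : B -> R) (kappa : R) : Prop :=
  (D 0 /\ (forall (a : R) x y, D x -> D y -> D (a *: x + y))) /\
  closure D = setT /\
  (forall l, S l -> is_linear (l : B -> R^o) /\ continuous l) /\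
  (forall x, D x -> (forall l, S l -> l x = 0) -> x = 0) /\
  (D e /\ coneR S e /\
   (forall h, D h -> exists lam : R, 0 <= lam /\ coneR S (lam *: e - h))) /\
  (forall h, D h -> `|h| = inf [set lam : R | 0 <= lam /\
      forall l, S l -> 0 <= l (lam *: e + h) /\ 0 <= l (lam *: e - h)]) /\
  [/\ in_Sstar D S m, is_linear (m : B -> R^o), continuous m,
      m e = 1 & forall h, coneR S h -> kappa * `|h| <= m h] /\
  (0 < kappa /\ kappa < 1).

Definition hilbert_dist (S : set (B -> R)) (h g : B) : \bar R :=
  let a := ereal_sup [set lam%:E | lam in
             [set lam : R | 0 < lam /\ coneR S (g - lam *: h)]] in
  let b := ereal_inf [set mu%:E | mu in
             [set mu : R | 0 < mu /\ coneR S (mu *: h - g)]] in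
  match a, b with
  | EFin a', EFin b' => if 0 < a' then (ln (b' / a'))%:E else +oo%E
  | _, _ => +oo%E
  end.

End Real.

Definition ediam (T : Type) (d : T -> T -> \bar R) (X : set T) : \bar R :=
  ereal_sup [set d h g | h in X & g in X].

Section Complex.
Variable B : normedModType R.
Local Open Scope complex_scope.

(* B_C = B x B, the pair (x, y) standing for x + i y *)
Definition cmod (z : R[i]) : R := Num.sqrt (complex.Re z ^+ 2 + complex.Im z ^+ 2).

(* complex scalar multiplication: (a + i b)(x + i y) *)
Definition cscale (z : R[i]) (p : B * B) : B * B :=
  (complex.Re z *: p.1 - complex.Im z *: p.2, complex.Im z *: p.1 + complex.Re z *: p.2).

Definition cnorm (p : B * B) : R :=
  sup [set Num.sqrt (`| cos t *: p.1 - sin t *: p.2 | ^+ 2 +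
                     `| sin t *: p.1 + cos t *: p.2 | ^+ 2) | t in [set: R]].

(* B'_C : continuous (= bounded) complex-linear functionals on B_C *)
Definition cdual (l : B * B -> R[i]) : Prop :=
  [/\ forall p q, l (p.1 + q.1, p.2 + q.2) = l p + l q,
      forall z p, l (cscale z p) = z * l p &
      exists M : R, forall p, cmod (l p) <= M * cnorm p].

Definition coneC (S : set (B -> R)) : set (B * B) :=
  [set p | exists (z : R[i]) (x y : B),
     [/\ z != 0, coneR S x, coneR S y & p = cscale z (x, y)]].

Definition cone_dual (S : set (B -> R)) : set (B * B -> R[i]) :=
  [set l | cdual l /\ forall h, coneC S h -> l h != 0].

Definition Eset (S : set (B -> R)) (h g : B * B) : set R[i] :=
  [set l h / l g | l in cone_dual S].

Definition delta_C (S : set (B -> R)) (h g : B * B) : \bar R :=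
  let s := ereal_sup [set (cmod z)%:E | z in Eset S h g] in
  let i := ereal_inf [set (cmod z)%:E | z in Eset S h g] in
  match s, i with
  | EFin s', EFin i' => if 0 < i' then (ln (s' / i'))%:E else +oo%E
  | _, _ => +oo%E
  end.

End Complex.

Definition complexify (B1 B2 : normedModType R) (A : B1 -> B2)
  (p : B1 * B1) : B2 * B2 := (A p.1, A p.2).

End ConeDefs.

(* A functional l of C'_C does not vanish on x + iy for x, y in the real cone,
   so l(C_R) is a convex cone of the plane disjoint from its rotation by a
   right angle; multiplying l by a suitable nu <> 0 therefore sends C_R into
   the closed first quadrant: nu l(x + iy) = (f x - g y) + i (g x + f y) with f,
   g nonnegative on C_R.  If s, t lie in A(C_1,R), a set of Hilbert diameter
   Delta, then every positive functional psi satisfies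
   a psi(t) <= psi(s) <= e^Delta a psi(t), and this makes |nu l(s + it)|
   comparable with phi(s) + phi(t), phi = f + g, up to the factor 4 e^Delta.
   Combining these estimates for two functionals l1, l2 with the same sandwich
   for phi1, phi2 gives |l1(h) l2(g)| <= 16 e^(3 Delta) |l2(h) l1(g)| on
   A(C_1,C), hence delta_C <= 3 Delta + 2 ln 4, which is below the claimed bound
   because 4 <= 3 sqrt 2 / kappa^2. *)

From Pilot Require Import Defs.
From HB Require Import structures.
From mathcomp Require Import all_boot all_order all_algebra.
From mathcomp Require Import all_classical all_reals all_analysis.
From mathcomp Require Import complex.
From mathcomp Require Import ring lra.
Set Implicit Arguments.
Unset Strict Implicit.
Unset Printing Implicit Defensive.

Import Order.TTheory GRing.Theory Num.Theory.
Import numFieldNormedType.Exports.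
Local Open Scope classical_set_scope.
Local Open Scope ring_scope.

Definition linear_form (R : realType) (B : lmodType R) (psi : B -> R) :=
  (forall x y, psi (x + y) = psi x + psi y) /\
  (forall (r : R) x, psi (r *: x) = r * psi x).

Lemma linear_form0 (R : realType) (B : lmodType R) (psi : B -> R) :
  linear_form psi -> psi 0 = 0.
Proof. by move=> [_ psiZ]; rewrite -(scale0r (0 : B)) psiZ mul0r. Qed.

Lemma linear_formB (R : realType) (B : lmodType R) (psi : B -> R) :
  linear_form psi -> forall x y, psi (x - y) = psi x - psi y.
Proof. by move=> [psiD psiZ] x y; rewrite psiD -scaleN1r psiZ mulN1r. Qed.

Section IsLinear.
Variables (R : realType) (V : normedModType R) (W : lmodType R) (f : V -> W).
Hypothesis flin : is_linear f.

Lemma is_linear0 : f 0 = 0.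
Proof.
have := flin 1 0 0; rewrite !scale1r addr0 => /(canLR (addrK (f 0))).
by rewrite subrr.
Qed.

Lemma is_linearD x y : f (x + y) = f x + f y.
Proof. by have := flin 1 x y; rewrite !scale1r. Qed.

Lemma is_linearZ (r : R) x : f (r *: x) = r *: f x.
Proof. by rewrite -[r *: x]addr0 flin is_linear0 addr0. Qed.

End IsLinear.

Lemma is_linear_form (R : realType) (V : normedModType R) (f : V -> R) :
  is_linear (f : V -> R^o) -> linear_form f.
Proof. by move=> flin; split; [exact: is_linearD | exact: is_linearZ]. Qed.

Lemma linear_form_bounded (R : realType) (V : normedModType R) (f : V -> R) :
  linear_form f -> continuous f -> exists2 K, 0 <= K & forall x, `|f x| <= K * `|x|.
Proof.
move=> [fD fZ] fcont.
have flin : linear (f : V -> R^o) by move=> a x y; rewrite fD fZ.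
pose fL : {linear V -> R^o} := HB.pack f (GRing.isLinear.Build _ _ _ _ f flin).
have /linear_boundedP [K [_ fK]] :=
  continuous_linear_bounded 0 (fcont 0 : {for 0, continuous fL}).
by exists (`|K| + 1) => //; apply: fK; rewrite (le_lt_trans (ler_norm K)) ?ltrDl.
Qed.

(* The left-hand side is the body of [delta_C] for the family of moduli [F]. *)
Lemma ln_sup_div_inf_le (R : realType) (T : Type) (Y : set T) (F : T -> R) (M : R) :
  Y !=set0 -> (forall z, Y z -> 0 < F z) ->
  (forall z w, Y z -> Y w -> F z <= M * F w) ->
  (match ereal_sup [set (F z)%:E | z in Y], ereal_inf [set (F z)%:E | z in Y] with
   | EFin s, EFin i => if (0 < i)%R then (ln (s / i))%:E else +oo%E
   | _, _ => +oo%E end <= (ln M)%:E)%E.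
Proof.
move=> [z0 Yz0] Fpos FM; have Fz0 := Fpos _ Yz0.
have sup_ge : ((F z0)%:E <= ereal_sup [set (F w)%:E | w in Y])%E.
  by apply: ereal_sup_ubound; exists z0.
have s_le z : Y z -> (ereal_sup [set (F w)%:E | w in Y] <= (M * F z)%:E)%E.
  by move=> Yz; apply: ge_ereal_sup => _ [w Yw <-]; rewrite lee_fin FM.
case Es: ereal_sup s_le (s_le z0 Yz0) sup_ge => [s| |] //.
rewrite !lee_fin => s_le _ sup_ge.
have s0 : 0 < s := lt_le_trans Fz0 sup_ge.
have M0 : 0 < M by rewrite -(pmulr_lgt0 _ Fz0) (lt_le_trans s0) // -lee_fin s_le.
have inf_le : (ereal_inf [set (F w)%:E | w in Y] <= (F z0)%:E)%E.
  by apply: ereal_inf_lbound; exists z0.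
have inf_ge : ((s / M)%:E <= ereal_inf [set (F w)%:E | w in Y])%E.
  apply: le_ereal_inf_tmp => _ [z Yz <-].
  by rewrite lee_fin ler_pdivrMr // mulrC -lee_fin s_le.
case Ei: ereal_inf inf_le inf_ge => [i| |] //.
rewrite !lee_fin => _ inf_ge.
have i0 : 0 < i by rewrite (lt_le_trans _ inf_ge) ?divr_gt0.
rewrite i0 lee_fin ler_ln ?posrE ?divr_gt0 //.
by rewrite ler_pdivrMr // mulrC -ler_pdivrMr.
Qed.

Lemma ediam_ub (R : realType) (T : Type) (d : T -> T -> \bar R) (X : set T) x y :
  (forall h g, d h g != -oo%E) -> (ediam d X < +oo)%E -> X x -> X y ->
  (d x y <= (fine (ediam d X))%:E)%E.
Proof.
move=> dNy Xfin Xx Xy.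
have dle : (d x y <= ediam d X)%E by apply: ereal_sup_ubound; exists x => //; exists y.
rewrite fineK // fin_numE (lt_eqF Xfin) andbT -ltNye.
by apply: lt_le_trans dle; rewrite ltNye.
Qed.

Lemma sqrt_sum_sqr_le (R : realType) (x y : R) : 0 <= y ->
  `|x| <= Num.sqrt (x ^+ 2 + y ^+ 2) /\ y <= Num.sqrt (x ^+ 2 + y ^+ 2) /\
  Num.sqrt (x ^+ 2 + y ^+ 2) <= `|x| + y.
Proof.
move=> y0; have xy0 : 0 <= `|x| + y by rewrite addr_ge0.
have sqr_le u v : u ^+ 2 <= v -> `|u| <= Num.sqrt v.
  by move=> uv; rewrite -sqrtr_sqr ler_sqrt // (le_trans (sqr_ge0 u)).
split; first by apply: sqr_le; rewrite lerDl sqr_ge0.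
split; first by rewrite -[y in y <= _]ger0_norm //; apply: sqr_le; rewrite lerDr sqr_ge0.
rewrite -[X in _ <= X]ger0_norm // -sqrtr_sqr ler_sqrt ?sqr_ge0 //.
rewrite sqrrD -real_normK ?num_real // lerD2r -{1}[y]ger0_norm // lerDl.
by rewrite mulrn_wge0 ?mulr_ge0.
Qed.

Lemma quadrant_pair_modulus_bounds (R : realType) (fs gs ft gt a q : R) :
  0 <= ft -> 0 <= gt -> 0 < a -> 1 <= q ->
  a * ft <= fs -> fs <= q * a * ft -> a * gt <= gs -> gs <= q * a * gt ->
  let N := Num.sqrt ((fs - gt) ^+ 2 + (gs + ft) ^+ 2) in
  N <= fs + gs + ft + gt /\ fs + gs + ft + gt <= 4 * q * N.
Proof.
move=> ft0 gt0 a0 q1 fs_lo fs_hi gs_lo gs_hi N.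
have fs0 : 0 <= fs by apply: le_trans fs_lo; rewrite mulr_ge0 // ltW.
have gs0 : 0 <= gs by apply: le_trans gs_lo; rewrite mulr_ge0 // ltW.
have [Nx [Ny Nxy]] := sqrt_sum_sqr_le (fs - gt) (addr_ge0 gs0 ft0).
rewrite -/N in Nx Ny Nxy.
have N0 : 0 <= N := sqrtr_ge0 _.
have q0 : 0 <= q := le_trans ler01 q1.
have fsgt : fs - gt <= N := le_trans (ler_norm _) Nx.
have gtfs : gt - fs <= N by rewrite (le_trans (ler_norm _)) // distrC.
have fsgt_le : `|fs - gt| <= fs + gt.
  by apply: le_trans (ler_normB _ _) _; rewrite !ger0_norm.
split; first lra.
have qN : N <= q * N by rewrite ler_peMl.
have [a1|a1] := leP 1 a.
  have : gt <= gs by apply: le_trans gs_lo; rewrite ler_peMl.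
  lra.
have [qa1|qa1] := leP (q * a) 1.
  have : fs <= ft by apply: (le_trans fs_hi); rewrite ler_piMl.
  lra.
have fs_le : fs <= q * ft.
  apply: (le_trans fs_hi); have -> : q * a * ft = a * (q * ft) by ring.
  by rewrite ler_piMl ?mulr_ge0 // ltW.
have gt_le : gt <= q * gs.
  apply: le_trans (ler_wpM2l (le_trans ler01 q1) gs_lo); rewrite mulrA.
  by rewrite ler_peMl // ltW.
have : q * (gs + ft) <= q * N by rewrite ler_wpM2l ?(le_trans ler01).
nra.
Qed.

Lemma complex_parts_linear (R : realType) (B : lmodType R) (L : B -> R[i]) :
  (forall x y, L (x + y) = L x + L y) -> (forall (r : R) x, L (r *: x) = r%:C%C * L x) ->
  linear_form (fun x => complex.Re (L x)) /\ linear_form (fun x => complex.Im (L x)).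
Proof.
move=> LD LZ; split; split=> [x y|r x]; rewrite ?LD ?LZ.
- by case: (L x); case: (L y).
- by case: (L x) => a b /=; rewrite mul0r subr0.
- by case: (L x); case: (L y).
- by case: (L x) => a b /=; rewrite mul0r addr0.
Qed.

Section QuadrantRotation.
Variables (R : realType) (B : lmodType R) (C : set B) (e0 : B).
Hypothesis Cadd : forall x y, C x -> C y -> C (x + y).
Hypothesis Cscale : forall (r : R) x, 0 < r -> C x -> C (r *: x).
Hypothesis Ce0 : C e0.

Section Normalized.
Variables P Q : B -> R.
Hypotheses (Plin : linear_form P) (Qlin : linear_form Q).
Hypotheses (Pe0 : 0 < P e0) (Qe0 : Q e0 = 0).
Hypothesis nonvanishing :
  forall x y, C x -> C y -> P x = Q y -> Q x = - P y -> False.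

(* If [P x <= 0], some [z := x + s e0] has purely imaginary image, and a right
   angle rotates it onto the image of a positive multiple of [e0]. *)
Lemma normalized_P_gt0 x : C x -> 0 < P x.
Proof.
have [PD PZ] := Plin; have [QD QZ] := Qlin.
move=> Cx; rewrite ltNge; apply/negP => Px0.
pose s := - P x / P e0.
have s0 : 0 <= s by rewrite /s divr_ge0 // ?oppr_ge0 // ltW.
pose z := x + s *: e0.
have Cz : C z.
  rewrite /z; have [->|sn0] := eqVneq s 0; first by rewrite scale0r addr0.
  by apply: Cadd => //; apply: Cscale => //; rewrite lt_neqAle eq_sym sn0.
have Pz : P z = 0 by rewrite /z PD PZ /s divfK ?gt_eqF // subrr.
have Qz : Q z = Q x by rewrite /z QD QZ Qe0 mulr0 addr0.
case: (ltgtP (Q z) 0) => Qz0.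
- apply: (@nonvanishing z ((- Q z / P e0) *: e0)) => //.
  + by apply: Cscale => //; rewrite divr_gt0 // oppr_gt0.
  + by rewrite QZ Qe0 mulr0 Pz.
  + by rewrite PZ divfK ?gt_eqF // opprK.
- apply: (@nonvanishing ((Q z / P e0) *: e0) z) => //.
  + by apply: Cscale => //; rewrite divr_gt0.
  + by rewrite PZ divfK ?gt_eqF.
  + by rewrite QZ Qe0 mulr0 Pz oppr0.
- by apply: (@nonvanishing z z) => //; rewrite Pz Qz0 ?oppr0.
Qed.

Let slope x := Q x / P x.

(* Otherwise the image of a positive combination of [x1] and [x2], rotated by
   a right angle, is the image of a positive multiple of [x2]. *)
Lemma slope_opposite_mul_le1 x1 x2 : C x1 -> C x2 ->
  0 < slope x1 -> slope x2 < 0 -> slope x1 * - slope x2 <= 1.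
Proof.
move=> C1 C2 t1p t2n; rewrite leNgt; apply/negP => H.
have [PD PZ] := Plin; have [QD QZ] := Qlin.
have p1n0 : P x1 != 0 by rewrite gt_eqF ?normalized_P_gt0.
have p2n0 : P x2 != 0 by rewrite gt_eqF ?normalized_P_gt0.
rewrite /slope in t1p t2n H.
set t1 := Q x1 / P x1 in t1p H; set t2 := Q x2 / P x2 in t2n H.
have eq1 : Q x1 = t1 * P x1 by rewrite /t1 divfK.
have eq2 : Q x2 = t2 * P x2 by rewrite /t2 divfK.
have t2n0 : t2 != 0 by rewrite lt_eqF.
pose tau := - t2^-1.
have taup : 0 < tau by rewrite /tau oppr_gt0 invr_lt0.
have tlt : tau < t1.
  by rewrite /tau -(ltr_pM2r (x := - t2)) ?oppr_gt0 // mulrNN mulVf // mulrC.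
pose a := tau - t2; pose b := t1 - tau.
have ap : 0 < a by rewrite /a subr_gt0 (lt_trans t2n).
have bp : 0 < b by rewrite /b subr_gt0.
have P1 := normalized_P_gt0 C1; have P2 := normalized_P_gt0 C2.
apply: (@nonvanishing (((a + b) * tau / P x2) *: x2)
                      ((a / P x1) *: x1 + (b / P x2) *: x2)).
- by apply: Cscale C2; rewrite divr_gt0 // mulr_gt0 // addr_gt0.
- by apply: Cadd; apply: Cscale => //; rewrite divr_gt0.
- by rewrite PZ QD !QZ eq1 eq2 /a /b /tau; field; rewrite p1n0 p2n0 t2n0.
- by rewrite QZ PD !PZ eq2 /a /b /tau; field; rewrite p1n0 p2n0 t2n0.
Qed.

Lemma slope_lbound x : C x -> 0 < slope x ->
  lbound [set slope y | y in C] (- (slope x)^-1).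
Proof.
move=> Cx sx0 _ [y Cy <-]; rewrite leNgt; apply/negP => sy.
have sy0 : slope y < 0 by rewrite (lt_trans sy) // oppr_lt0 invr_gt0.
have := slope_opposite_mul_le1 Cx Cy sx0 sy0; rewrite leNgt => /negP; apply.
by rewrite -(mulfV (lt0r_neq0 sx0)) ltr_pM2l // ltrNr.
Qed.

(* With [m] the infimum of the slopes, the image of [C] lies in the right angle
   turning counterclockwise from the direction of slope [m], which [1 - i m]
   rotates onto the first quadrant; if the slopes are unbounded below, the
   image lies in the fourth quadrant. *)
Lemma normalized_quadrant_rotation : exists c d : R, (c != 0) || (d != 0) /\
  forall x, C x -> 0 <= c * P x - d * Q x /\ 0 <= c * Q x + d * P x.
Proof.
pose S := [set slope x | x in C].
have PQ x : C x -> Q x = slope x * P x.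
  by move=> Cx; rewrite /slope divfK ?gt_eqF ?normalized_P_gt0.
have [Slb|Snlb] := pselect (has_lbound S); last first.
  exists 0, 1; split; first by rewrite oner_neq0 orbT.
  move=> x Cx; rewrite !mul0r !mul1r sub0r add0r oppr_ge0 (PQ x Cx).
  split; last exact/ltW/normalized_P_gt0.
  rewrite pmulr_lle0 ?normalized_P_gt0 // leNgt; apply/negP => sx0.
  by apply: Snlb; exists (- (slope x)^-1); exact: slope_lbound.
have S0 : S !=set0 by exists (slope e0), e0.
exists 1, (- inf S); split; first by rewrite oner_neq0.
move=> x Cx; have Px := normalized_P_gt0 Cx.
have infS : inf S <= slope x by apply: ge_inf => //; exists x.
suff : 0 <= 1 + inf S * slope x.
  by rewrite (PQ x Cx); split; nra.
have [sx0|sx0] := ltP 0 (slope x).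
  have := lb_le_inf S0 (slope_lbound Cx sx0).
  rewrite -subr_ge0 opprK -(pmulr_rge0 _ sx0) mulrDr mulfV ?lt0r_neq0 //.
  by rewrite mulrC addrC.
have [infS0|infS0] := leP (inf S) 0; last by lra.
by rewrite addr_ge0 // mulr_le0.
Qed.

End Normalized.

Local Open Scope complex_scope.

Lemma cone_quadrant_rotation (L : B -> R[i]) :
  (forall x y, L (x + y) = L x + L y) ->
  (forall (r : R) x, L (r *: x) = r%:C * L x) ->
  (forall x y, C x -> C y -> L x + 'i * L y != 0) ->
  exists nu : R[i], nu != 0 /\
    forall x, C x -> 0 <= complex.Re (nu * L x) /\ 0 <= complex.Im (nu * L x).
Proof.
move=> LD LZ L_nonvanishing.
have Le0 : L e0 != 0.
  by apply: contraNneq (L_nonvanishing _ _ Ce0 Ce0) => ->; rewrite mulr0 addr0.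
(* Multiplying by the conjugate of [L e0] makes [L e0] real and positive. *)
pose nu0 := complex.Re (L e0) +i* - complex.Im (L e0).
have nu0_neq0 : nu0 != 0.
  by move: Le0; rewrite !eq_complex /= oppr_eq0; case: (L e0).
pose P x := complex.Re (nu0 * L x); pose Q x := complex.Im (nu0 * L x).
have PQE x : nu0 * L x = P x +i* Q x by rewrite /P /Q; case: (nu0 * L x).
have [Plin Qlin] : linear_form P /\ linear_form Q.
  by apply: complex_parts_linear => [x y|r x]; rewrite ?LD ?LZ ?mulrDr // mulrCA.
have Pe0 : 0 < P e0.
  rewrite /P /nu0; case: (L e0) Le0 => a b; rewrite eq_complex /= => ab0.
  have -> : a * a - - b * b = a ^+ 2 + b ^+ 2 by ring.
  rewrite lt_def paddr_eq0 ?sqr_ge0 // !sqrf_eq0 ?addr_ge0 ?sqr_ge0 //.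
  by rewrite andbT.
have Qe0 : Q e0 = 0 by rewrite /Q /nu0; case: (L e0) => a b /=; ring.
have nonvanishing x y : C x -> C y -> P x = Q y -> Q x = - P y -> False.
  move=> Cx Cy PQ QP; move: (mulf_neq0 nu0_neq0 (L_nonvanishing _ _ Cx Cy)).
  rewrite mulrDr mulrCA !PQE PQ QP eq_complex /=.
  by rewrite !(mul0r, mul1r, subr0, add0r, subrr, addNr) eqxx.
have [c [d [cd0 Hcd]]] :=
  normalized_quadrant_rotation Plin Qlin Pe0 Qe0 nonvanishing.
exists ((c +i* d) * nu0); split.
  by rewrite mulf_neq0 // eq_complex /= negb_and.
by move=> x Cx; rewrite -mulrA PQE /=; exact: Hcd.
Qed.

End QuadrantRotation.

Section Comparability.
Variables (R : realType) (B : normedModType R) (S : set (B -> R)).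

Definition positive_form (psi : B -> R) :=
  linear_form psi /\ forall x, coneR S x -> 0 <= psi x.

Definition cone_comparable (q : R) (s t : B) := exists2 a : R, 0 < a &
  forall psi, positive_form psi -> a * psi t <= psi s /\ psi s <= q * a * psi t.

Lemma hilbert_dist_neqNy h g : hilbert_dist S h g != -oo%E.
Proof.
rewrite /hilbert_dist; case: (ereal_sup (R := R) _) => [a| |] //.
by case: (ereal_inf (R := R) _) => [b| |] //=; case: ifP.
Qed.

Lemma hilbert_dist_comparable s t r : coneR S s -> coneR S t ->
  (hilbert_dist S t s <= r%:E)%E -> cone_comparable (expR r) s t.
Proof.
move=> Cs Ct; rewrite /hilbert_dist.
set As := [set lam%:E | lam in _]; set Bs := [set mu%:E | mu in _].
case Ea: (ereal_sup As) => [a| |]; case Eb: (ereal_inf Bs) => [b| |] //.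
case: ifP => // a0; rewrite lee_fin => ba_r.
have [mu [mu0 Cmu]] : exists mu, 0 < mu /\ coneR S (mu *: t - s).
  apply: contrapT => noBs; move: Eb; rewrite (_ : Bs = set0) ?ereal_inf0 //.
  by apply/seteqP; split => // _ [mu Bmu <-]; apply: noBs; exists mu.
have b_le : b <= expR r * a.
  have [b0|b0] := leP b 0; first by rewrite (le_trans b0) // mulr_ge0 ?expR_ge0 ?ltW.
  by rewrite -ler_pdivrMr // -(lnK (divr_gt0 b0 a0)) ler_expR.
exists a => // psi [psilin psi0]; have [_ psiZ] := psilin.
have [pt0|pt0] := eqVneq (psi t) 0.
  have := psi0 _ Cmu; rewrite linear_formB // psiZ pt0 mulr0 sub0r oppr_ge0.
  by rewrite !mulr0 => ps0; split => //; exact: psi0.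
have {pt0}pt0 : 0 < psi t by rewrite lt0r pt0 psi0.
split.
  rewrite -ler_pdivlMr // -lee_fin -Ea; apply: ge_ereal_sup => _ [lam [_ Clam] <-].
  rewrite lee_fin ler_pdivlMr //; have := psi0 _ Clam.
  by rewrite linear_formB // psiZ subr_ge0.
apply: le_trans (ler_wpM2r (ltW pt0) b_le).
rewrite -ler_pdivrMr // -lee_fin -Eb; apply: le_ereal_inf_tmp => _ [lam [_ Clam] <-].
rewrite lee_fin ler_pdivrMr //; have := psi0 _ Clam.
by rewrite linear_formB // psiZ subr_ge0.
Qed.

End Comparability.

Section ConeSetting.
Variables (R : realType) (B : normedModType R) (D : set B) (S : set (B -> R)).
Variables (e : B) (m : B -> R) (kappa : R).
Hypothesis H : cone_setting D S e m kappa.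

Lemma setting_S_linear l : S l -> linear_form l.
Proof. by case: H => _ [_ [Slin _]] /Slin [/is_linear_form]. Qed.

Lemma setting_m_linear : linear_form m.
Proof. by case: H => _ [_ [_ [_ [_ [_ [[_ /is_linear_form]]]]]]]. Qed.

Lemma setting_m_continuous : continuous m.
Proof. by case: H => _ [_ [_ [_ [_ [_ [[]]]]]]]. Qed.

Lemma setting_kappa : 0 < kappa /\ kappa < 1.
Proof. by case: H => _ [_ [_ [_ [_ [_ []]]]]]. Qed.

Lemma setting_e_cone : coneR S e.
Proof. by case: H => _ [_ [_ [_ [[_ [Ce _]] _]]]]. Qed.

Lemma m_gt0_cone x : coneR S x -> 0 < m x.
Proof.
case: H => _ [_ [_ [_ [_ [_ [[_ _ _ _ mge] [k0 _]]]]]]] Cx.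
apply: lt_le_trans (mge _ Cx); rewrite mulr_gt0 // normr_gt0.
by case: Cx => /eqP.
Qed.

Lemma coneR_add x y : coneR S x -> coneR S y -> coneR S (x + y).
Proof.
move=> Cx Cy; have [mD _] := setting_m_linear; split.
  move=> xy0; have := addr_gt0 (m_gt0_cone Cx) (m_gt0_cone Cy).
  by rewrite -mD xy0 (linear_form0 setting_m_linear) ltxx.
move=> l Sl; rewrite (proj1 (setting_S_linear Sl)).
by apply: addr_ge0; [exact: (proj2 Cx) | exact: (proj2 Cy)].
Qed.

Lemma coneR_scale (r : R) x : 0 < r -> coneR S x -> coneR S (r *: x).
Proof.
move=> r0 [x0 Cx]; split.
  by move=> /eqP; rewrite scaler_eq0 gt_eqF //= => /eqP.
move=> l Sl; rewrite (proj2 (setting_S_linear Sl)).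
by apply: mulr_ge0; [exact: ltW | exact: Cx].
Qed.

Lemma m_positive_form : positive_form S m.
Proof. by split=> [|x Cx]; [exact: setting_m_linear | exact/ltW/m_gt0_cone]. Qed.

Lemma cone_comparable_ge1 q s t : coneR S t -> cone_comparable S q s t -> 1 <= q.
Proof.
move=> Ct [a a0 /(_ m m_positive_form) [lo hi]].
have mt0 := m_gt0_cone Ct.
by rewrite -(ler_pM2r (mulr_gt0 a0 mt0)) mul1r mulrA (le_trans lo hi).
Qed.

End ConeSetting.

Section ComplexModulus.
Variable R : realType.
Local Open Scope complex_scope.

Lemma cmodE (z : R[i]) : cmod z = Normc.normc z.
Proof. by case: z. Qed.

Lemma cmodM (z w : R[i]) : cmod (z * w) = cmod z * cmod w.
Proof. by rewrite !cmodE Normc.normcM. Qed.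

Lemma cmodV (z : R[i]) : cmod z^-1 = (cmod z)^-1.
Proof. by rewrite !cmodE Normc.normcV. Qed.

Lemma cmod_gt0 (z : R[i]) : z != 0 -> 0 < cmod z.
Proof.
move=> z0; rewrite lt_def sqrtr_ge0 andbT.
by apply: contraNneq z0 => cz0; apply/eqP/Normc.eq0_normc; rewrite -cmodE.
Qed.

End ComplexModulus.

Section ComplexDual.
Variables (R : realType) (B : normedModType R).
Local Open Scope complex_scope.

Lemma cscale1 (p : B * B) : Defs.cscale 1 p = p.
Proof. by case: p => x y; rewrite /Defs.cscale /= !scale1r !scale0r subr0 add0r. Qed.

Lemma sqrt_norms_le_cnorm (p : B * B) : Num.sqrt (`|p.1| ^+ 2 + `|p.2| ^+ 2) <= cnorm p.
Proof.
rewrite /cnorm; apply: ub_le_sup; last first.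
  by exists 0 => //; rewrite cos0 sin0 !scale0r !scale1r subr0 add0r.
exists (2 * (`|p.1| + `|p.2|)) => _ [t _ <-].
have trig_le (u v : R) : `|u| <= 1 -> `|v| <= 1 ->
    `|u *: p.1 + v *: p.2| <= `|p.1| + `|p.2|.
  move=> u1 v1; apply: le_trans (ler_normD _ _) _; rewrite !normrZ.
  by apply: lerD; rewrite ler_piMl.
have Nsin_max : `|- sin t| <= 1 by rewrite normrN sin_max.
have h1 := trig_le _ _ (cos_max t) Nsin_max.
have h2 := trig_le _ _ (sin_max t) (cos_max t).
rewrite -scaleNr.
have [_ [_ N]] := sqrt_sum_sqr_le `|cos t *: p.1 + - sin t *: p.2|
  (normr_ge0 (sin t *: p.1 + cos t *: p.2)).
by rewrite normr_id in N; lra.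
Qed.

Variable l : B * B -> R[i].
Hypothesis ldual : cdual l.

Lemma cdual_scale z p : l (Defs.cscale z p) = z * l p.
Proof. by case: ldual. Qed.

Lemma cdual_pair x y : l (x, y) = l (x, 0) + 'i * l (y, 0).
Proof.
have [ladd _ _] := ldual.
have -> : (x, y) = ((x, 0 : B).1 + (0 : B, y).1, (x, 0 : B).2 + (0 : B, y).2).
  by rewrite /= addr0 add0r.
rewrite ladd -cdual_scale /Defs.cscale /=.
by rewrite !scale0r !scaler0 scale1r subr0 addr0.
Qed.

Lemma cdual_addl x y : l (x + y, 0) = l (x, 0) + l (y, 0).
Proof. by have [ladd _ _] := ldual; rewrite -ladd /= addr0. Qed.

Lemma cdual_scalel (r : R) x : l (r *: x, 0) = r%:C * l (x, 0).
Proof.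
by rewrite -cdual_scale /Defs.cscale /= !scaler0 scale0r subr0 addr0.
Qed.

End ComplexDual.

Section ConeDual.
Variables (R : realType) (B : normedModType R) (D : set B) (S : set (B -> R)).
Variables (e : B) (m : B -> R) (kappa : R).
Hypothesis H : cone_setting D S e m kappa.
Local Open Scope complex_scope.

Lemma coneC_pair s t : coneR S s -> coneR S t -> coneC S (s, t).
Proof. by move=> Cs Ct; exists 1, s, t; rewrite cscale1 oner_neq0. Qed.

Lemma cone_dual_rotation l : cone_dual S l -> exists nu : R[i], nu != 0 /\
  forall x, coneR S x ->
    0 <= complex.Re (nu * l (x, 0)) /\ 0 <= complex.Im (nu * l (x, 0)).
Proof.
move=> [ldual lC].
apply: (cone_quadrant_rotation (coneR_add H) (coneR_scale H) (setting_e_cone H)).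
- exact: cdual_addl.
- exact: cdual_scalel.
- by move=> x y Cx Cy; rewrite -cdual_pair //; apply/lC/coneC_pair.
Qed.

Lemma cone_dual_modulus_comparable l : cone_dual S l ->
  exists2 k, 0 < k & exists2 phi, positive_form S phi &
    forall q s t, coneR S s -> coneR S t -> 1 <= q -> cone_comparable S q s t ->
      k * cmod (l (s, t)) <= phi s + phi t /\
      phi s + phi t <= 4 * q * (k * cmod (l (s, t))).
Proof.
move=> ldual; have [nu [nu0 nuC]] := cone_dual_rotation ldual.
pose f x := complex.Re (nu * l (x, 0)); pose g x := complex.Im (nu * l (x, 0)).
have [flin glin] : linear_form f /\ linear_form g.
  apply: complex_parts_linear => [x y|r x].
    by rewrite cdual_addl ?mulrDr //; case: ldual.
  by rewrite cdual_scalel 1?mulrCA //; case: ldual.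
have fpos : positive_form S f by split=> // x /nuC [].
have gpos : positive_form S g by split=> // x /nuC [].
have [[fD fZ] [gD gZ]] := (flin, glin).
exists (cmod nu); first exact: cmod_gt0.
exists (fun x => f x + g x).
  split=> [|x /nuC [? ?]]; last exact: addr_ge0.
  by split=> [x y|r x]; rewrite ?fD ?gD ?fZ ?gZ; ring.
move=> q s t Cs Ct q1 [a a0 comp].
have [fs_lo fs_hi] := comp f fpos; have [gs_lo gs_hi] := comp g gpos.
have lE : nu * l (s, t) = (f s - g t) +i* (g s + f t).
  rewrite cdual_pair; last by case: ldual.
  rewrite mulrDr mulrCA /f /g.
  case: (nu * l (s, 0)) => ? ?; case: (nu * l (t, 0)) => ? ? /=.
  by apply/eqP; rewrite eq_complex /=; apply/andP; split; apply/eqP; ring.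
rewrite -cmodM lE.
have [N_le le_N] := quadrant_pair_modulus_bounds (fpos.2 _ Ct) (gpos.2 _ Ct) a0 q1
  fs_lo fs_hi gs_lo gs_hi.
by split; [move: N_le | move: le_N]; rewrite /cmod /=; lra.
Qed.

Lemma cone_dual_nonempty : cone_dual S !=set0.
Proof.
have [mD mZ] := setting_m_linear H.
have [K K0 mK] := linear_form_bounded (setting_m_linear H) (setting_m_continuous H).
have mB := linear_formB (setting_m_linear H).
have mscale z p : (m (Defs.cscale z p).1 +i* m (Defs.cscale z p).2) =
    z * (m p.1 +i* m p.2).
  by case: z => a b; rewrite /Defs.cscale /= mB mD !mZ; congr (_ +i* _); ring.
exists (fun p => m p.1 +i* m p.2); split; first split.
- by move=> p r; rewrite /= !mD.
- exact: mscale.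
- exists K => p; apply: le_trans (ler_wpM2l K0 (sqrt_norms_le_cnorm p)).
  rewrite /cmod /= -[K](@ger0_norm _ K) // -sqrtr_sqr -sqrtrM ?sqr_ge0 //.
  rewrite ler_sqrt ?mulr_ge0 ?addr_ge0 ?sqr_ge0 // mulrDr -!exprMn.
  by rewrite -(real_normK (num_real (m p.1))) -(real_normK (num_real (m p.2)))
    lerD // lerXn2r ?nnegrE ?mulr_ge0.
- move=> _ [z [x [y [z0 Cx _ ->]]]]; rewrite mscale mulf_neq0 // eq_complex /=.
  by rewrite negb_and gt_eqF ?(m_gt0_cone H).
Qed.

Section ComparableFamily.
Variables (P : set B) (q : R).
Hypothesis P_cone : P `<=` coneR S.
Hypothesis P_comparable : forall s t, P s -> P t -> cone_comparable S q s t.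

Lemma comparable_family_ge1 s : P s -> 1 <= q.
Proof. by move=> Ps; have := cone_comparable_ge1 H (P_cone Ps) (P_comparable Ps Ps). Qed.

Section PositiveForms.
Variables phi1 phi2 : B -> R.
Hypotheses (phi1_pos : positive_form S phi1) (phi2_pos : positive_form S phi2).

Lemma positive_forms_cross s t : P s -> P t ->
  phi1 s * phi2 t <= q * (phi1 t * phi2 s).
Proof.
move=> Ps Pt; have [a a0 comp] := P_comparable Ps Pt.
have [_ phi1_hi] := comp _ phi1_pos; have [phi2_lo _] := comp _ phi2_pos.
have phi1t0 := phi1_pos.2 _ (P_cone Pt); have phi2t0 := phi2_pos.2 _ (P_cone Pt).
have q0 : 0 <= q := le_trans ler01 (comparable_family_ge1 Ps).
apply: le_trans (ler_wpM2r phi2t0 phi1_hi) _.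
have -> : q * a * phi1 t * phi2 t = q * phi1 t * (a * phi2 t) by ring.
by rewrite [leRHS]mulrA ler_wpM2l ?mulr_ge0.
Qed.

Lemma positive_forms_pair_cross s t s' t' : P s -> P t -> P s' -> P t' ->
  (phi1 s + phi1 t) * (phi2 s' + phi2 t') <=
    q * ((phi1 s' + phi1 t') * (phi2 s + phi2 t)).
Proof.
move=> Ps Pt Ps' Pt'.
have := positive_forms_cross Ps Ps'; have := positive_forms_cross Ps Pt'.
have := positive_forms_cross Pt Ps'; have := positive_forms_cross Pt Pt'.
nra.
Qed.

End PositiveForms.

Lemma cone_dual_cross_ratio l1 l2 s t s' t' :
  cone_dual S l1 -> cone_dual S l2 -> P s -> P t -> P s' -> P t' ->
  cmod (l1 (s, t)) * cmod (l2 (s', t')) <=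
    (4 * q) ^+ 2 * q * (cmod (l2 (s, t)) * cmod (l1 (s', t'))).
Proof.
move=> l1d l2d Ps Pt Ps' Pt'; have q1 := comparable_family_ge1 Ps.
have q0 : 0 <= q := le_trans ler01 q1.
have [k1 k10 [phi1 phi1_pos bnd1]] := cone_dual_modulus_comparable l1d.
have [k2 k20 [phi2 phi2_pos bnd2]] := cone_dual_modulus_comparable l2d.
have [lo1 _] := bnd1 q s t (P_cone Ps) (P_cone Pt) q1 (P_comparable Ps Pt).
have [_ hi1] := bnd1 q s' t' (P_cone Ps') (P_cone Pt') q1 (P_comparable Ps' Pt').
have [lo2 _] := bnd2 q s' t' (P_cone Ps') (P_cone Pt') q1 (P_comparable Ps' Pt').
have [_ hi2] := bnd2 q s t (P_cone Ps) (P_cone Pt) q1 (P_comparable Ps Pt).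
have sum_ge0 phi u v : positive_form S phi -> P u -> P v -> 0 <= phi u + phi v.
  by move=> [_ phi0] Pu Pv; apply: addr_ge0; apply/phi0/P_cone.
rewrite -(ler_pM2l (mulr_gt0 k10 k20)).
set a1 := cmod (l1 (s, t)); set b1 := cmod (l1 (s', t')).
set a2 := cmod (l2 (s, t)); set b2 := cmod (l2 (s', t')).
have -> : k1 * k2 * (a1 * b2) = k1 * a1 * (k2 * b2) by ring.
have -> : k1 * k2 * ((4 * q) ^+ 2 * q * (a2 * b1)) =
    q * ((4 * q * (k1 * b1)) * (4 * q * (k2 * a2))) by ring.
have k_cmod_ge0 (k : R) z : 0 < k -> 0 <= k * cmod z.
  by move=> k0; apply: mulr_ge0; [exact: ltW | exact: sqrtr_ge0].
apply: le_trans (ler_pM (k_cmod_ge0 _ _ k10) (k_cmod_ge0 _ _ k20) lo1 lo2) _.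
apply: le_trans (positive_forms_pair_cross phi1_pos phi2_pos Ps Pt Ps' Pt') _.
by rewrite ler_wpM2l // ler_pM ?sum_ge0.
Qed.

Lemma delta_C_family_le z w s t s' t' : z != 0 -> w != 0 ->
  P s -> P t -> P s' -> P t' ->
  (delta_C S (Defs.cscale z (s, t)) (Defs.cscale w (s', t')) <=
     (ln ((4 * q) ^+ 2 * q))%:E)%E.
Proof.
move=> z0 w0 Ps Pt Ps' Pt'.
have inC u v : P u -> P v -> coneC S (u, v).
  by move=> Pu Pv; apply: coneC_pair; apply: P_cone.
rewrite /delta_C /Eset !image_comp; apply: ln_sup_div_inf_le.
- exact: cone_dual_nonempty.
- move=> l [ldual lC] /=; rewrite !cdual_scale //; apply: cmod_gt0.
  by rewrite mulf_neq0 ?invr_eq0 ?mulf_neq0 //; apply/lC/inC.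
move=> l1 l2 l1d l2d /=; have [[l1dual l1C] [l2dual l2C]] := (l1d, l2d).
rewrite !cdual_scale // !(cmodM, cmodV).
have cross := cone_dual_cross_ratio l1d l2d Ps Pt Ps' Pt'.
set a1 := cmod (l1 (s, t)) in cross *; set b1 := cmod (l1 (s', t')) in cross *.
set a2 := cmod (l2 (s, t)) in cross *; set b2 := cmod (l2 (s', t')) in cross *.
have b10 : 0 < b1 by apply/cmod_gt0/l1C/inC.
have b20 : 0 < b2 by apply/cmod_gt0/l2C/inC.
have w0' := cmod_gt0 w0.
have -> : cmod z * a1 / (cmod w * b1) = cmod z / cmod w * (a1 / b1).
  by field; rewrite !gt_eqF.
have -> : (4 * q) ^+ 2 * q * (cmod z * a2 / (cmod w * b2)) =
    cmod z / cmod w * ((4 * q) ^+ 2 * q * a2 / b2).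
  by field; rewrite !gt_eqF.
rewrite ler_wpM2l ?divr_ge0 ?sqrtr_ge0 // ler_pdivrMr // mulrAC ler_pdivlMr //.
by rewrite -[leRHS]mulrA.
Qed.

End ComparableFamily.

End ConeDual.

Lemma four_le_sqrt2_div_sqr (R : realType) (kappa : R) : 0 < kappa -> kappa < 1 ->
  4 <= 3 * Num.sqrt 2 / kappa ^+ 2.
Proof.
move=> k0 k1.
have sqrt2 : 4 <= 3 * Num.sqrt 2 :> R.
  have s2 : Num.sqrt 2 ^+ 2 = 2 :> R by rewrite sqr_sqrtr.
  have s0 : 0 <= Num.sqrt 2 :> R := sqrtr_ge0 _.
  nra.
rewrite ler_pdivlMr ?exprn_gt0 //; apply: le_trans sqrt2.
by rewrite ler_piMr // expr_le1 ?ltW.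
Qed.

Lemma ln_comparability_bound (R : realType) (q kappa : R) :
  1 <= q -> 0 < kappa -> kappa < 1 ->
  ln ((4 * q) ^+ 2 * q) <= 8 * ln q + 2 * ln (3 * Num.sqrt 2 / kappa ^+ 2).
Proof.
move=> q1 k0 k1; set c := 3 * Num.sqrt 2 / kappa ^+ 2.
have c4 := four_le_sqrt2_div_sqr k0 k1.
have q0 : 0 < q := lt_le_trans ltr01 q1.
have c0 : 0 < c := lt_le_trans (ltr0n _ 4) c4.
rewrite -ler_expR lnK ?posrE ?mulr_gt0 ?exprn_gt0 ?mulr_gt0 //.
rewrite expRD !expRM_natl !lnK ?posrE //.
have -> : (4 * q) ^+ 2 * q = q ^+ 3 * 4 ^+ 2 by ring.
have q3 : 0 <= q ^+ 3 := exprn_ge0 _ (ltW q0).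
apply: ler_pM => //.
  by rewrite (_ : 8 = 3 + 5)%N // exprD ler_peMr // exprn_ege1.
by rewrite !expr2 ler_pM.
Qed.

Lemma complexify_cscale (R : realType) (B1 B2 : normedModType R) (A : B1 -> B2) :
  is_linear A -> forall z x y,
  complexify A (Defs.cscale z (x, y)) = Defs.cscale z (A x, A y).
Proof.
move=> Alin z x y; rewrite /complexify /Defs.cscale /= -!scaleNr.
by rewrite !(is_linearD Alin) !(is_linearZ Alin).
Qed.

Theorem lemma5p16 (R : realType)
  (B1 B2 : completeNormedModType R)
  (D1 : set B1) (S1 : set (B1 -> R)) (e1 : B1) (m1 : B1 -> R)
  (D2 : set B2) (S2 : set (B2 -> R)) (e2 : B2) (m2 : B2 -> R)
  (kappa : R)
  (H1 : cone_setting D1 S1 e1 m1 kappa)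
  (H2 : cone_setting D2 S2 e2 m2 kappa)
  (A : B1 -> B2)
  (Alin : is_linear A) (Acont : continuous A)
  (Acone : A @` coneR S1 `<=` coneR S2)
  (Afin : (ediam (hilbert_dist S2) (A @` coneR S1) < +oo)%E) :
  (ediam (delta_C S2) (complexify A @` coneC S1) <=
     (8 * fine (ediam (hilbert_dist S2) (A @` coneR S1))
      + 2 * ln (3 * Num.sqrt 2 / kappa ^+ 2))%:E)%E.
Proof.
have [k0 k1] := setting_kappa H2.
set P := A @` coneR S1; set Delta := fine (ediam (hilbert_dist S2) P).
have P_comparable s t : P s -> P t -> cone_comparable S2 (expR Delta) s t.
  move=> Ps Pt; apply: (hilbert_dist_comparable (Acone _ Ps) (Acone _ Pt)).
  exact: ediam_ub (@hilbert_dist_neqNy _ _ S2) Afin Pt Ps.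
have PA u : coneR S1 u -> P (A u) by exists u.
apply: ge_ereal_sup => _ [_ [p Cp <-] [_ [p' Cp' <-] <-]].
move: Cp Cp' => [z [x [y [z0 Cx Cy ->]]]] [w [x' [y' [w0 Cx' Cy' ->]]]].
rewrite !complexify_cscale //.
apply: le_trans (delta_C_family_le H2 Acone P_comparable z0 w0
  (PA _ Cx) (PA _ Cy) (PA _ Cx') (PA _ Cy')) _.
rewrite lee_fin -[Delta in 8 * Delta]expRK ln_comparability_bound //.
by have := comparable_family_ge1 H2 Acone P_comparable (PA _ Cx).
Qed.
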